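(* Let $p$ be an odd prime, let $0<s<p-1$ be an integer, and let $0<a,a'<p$ be integers with $a'\equiv sa\pmod p$. Then $b_{1,s}(a)=0$ in $\mathbb F_p$ (evaluating at $a$ viewed as an element of $\mathbb F_p$) if and only if $a+a'<p$.
   Context: $\mathbb F_p$ is the field of $p$ elements, $\alpha$ an indeterminate, $\binom{x}{m}=x(x-1)\cdots(x-m+1)/m!$. For integers $0<r,s<p$ (interpreted as elements of $\mathbb F_p$), $b_{r,s}(\alpha)=\sum_{k=0}^{p-1}(-r/s)^k\binom{r\alpha-1}{p-1-k}\binom{s\alpha-1}{k}\in\mathbb F_p[\alpha]$. *)

From HB Require Import structures.
From mathcomp Require Import all_boot all_order all_algebra.
Set Implicit Arguments. Unset Strict Implicit. Unset Printing Implicit Defensive.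
Import GRing.Theory.
Local Open Scope ring_scope.

Definition polybinom (F : fieldType) (x : {poly F}) (m : nat) : {poly F} :=
  (m`!%:R)^-1 *: \prod_(i < m) (x - (i%:R)%:P).

Definition bpoly (p r s : nat) : {poly 'F_p} :=
  \sum_(k < p) ((- ((r%:R : 'F_p) / s%:R)) ^+ k) *:
     (polybinom (r%:R *: 'X - 1) (p.-1 - k) * polybinom (s%:R *: 'X - 1) k).

From mathcomp Require Import all_boot all_order all_algebra.
From mathcomp Require Import ring zify.
Set Implicit Arguments.
Unset Strict Implicit.
Unset Printing Implicit Defensive.

Import GRing.Theory.
Local Open Scope ring_scope.

(* At alpha = a the two binomials of b_{1,s} become C(a-1, p-1-k) and
   C(a'-1, k), so b_{1,s}(a) is the coefficient of X^(p-1) in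
   (1+X)^(a-1) (1+cX)^(a'-1) with c = -1/s.  Writing 1 + cX = (1-c) + c(1+X)
   turns it into sum_i (1-c)^(a'-1-i) c^i C(a'-1,i) C(a-1+i, p-1), and modulo
   p the binomial C(j, p-1) with j <= 2p-2 vanishes unless j = p-1.  Hence at
   most the term i = p-a survives; it is present iff a + a' > p, and it is
   nonzero since c, 1-c and C(a'-1, p-a) are.  Finally a + a' = p is
   impossible because a + a' = (s+1) a mod p. *)

Lemma prime_dvd_fact p m : prime p -> (p %| m`!)%N = (p <= m)%N.
Proof.
move=> p_pr; elim: m => [|m IHm].
  by rewrite dvdn1 leqn0; case: eqP p_pr => [->|_]; case: eqP => [->|].
rewrite factS Euclid_dvdM // IHm.
have [lt_p_m1 | gt_p_m1 | ->] := ltngtP p m.+1; last by rewrite dvdnn.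
- by move: lt_p_m1; rewrite ltnS => ->; rewrite orbT.
- by rewrite gtnNdvd // leqNgt ltnW.
Qed.

Lemma natr_ffact (R : comNzRingType) n m :
  (n ^_ m)%:R = \prod_(i < m) (n%:R - i%:R) :> R.
Proof.
elim: m => [|m IHm]; first by rewrite big_ord0 ffactn0.
rewrite big_ord_recr /= -IHm ffactnSr natrM.
have [le_m_n | lt_n_m] := leqP m n; first by rewrite natrB.
by rewrite ffact_small // !mul0r.
Qed.

Section BinomialPowers.

Variable R : comNzRingType.
Implicit Types (c : R) (A B m j : nat).

Lemma coef_exp1cX c m j : ((1 + c *: 'X) ^+ m)`_j = c ^+ j * 'C(m, j)%:R.
Proof.
elim: m j => [|m IHm] j.
  by rewrite expr0 coefC; case: j => [|j]; rewrite ?bin0 ?bin0n ?mulr0 ?mulr1.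
rewrite exprSr mulrDr mulr1 -scalerAr coefD coefZ coefMX !IHm.
case: j => [|j] /=; first by rewrite !bin0 mulr0 addr0.
by rewrite binS natrD exprS; ring.
Qed.

Lemma coef_exp1X m j : ((1 + 'X) ^+ m)`_j = 'C(m, j)%:R :> R.
Proof. by rewrite -[X in 1 + X]scale1r coef_exp1cX expr1n mul1r. Qed.

Lemma exp1X_mul_exp1cX c A B :
  (1 + 'X) ^+ A * (1 + c *: 'X) ^+ B =
  \sum_(i < B.+1) ((1 - c) ^+ (B - i) * c ^+ i * 'C(B, i)%:R) *: (1 + 'X) ^+ (A + i).
Proof.
have -> : 1 + c *: 'X = (1 - c)%:P + c%:P * (1 + 'X) :> {poly R}.
  by rewrite -mul_polyC polyCB polyC1; ring.
rewrite (exprDn _ _ B) mulr_sumr; apply: eq_bigr => i _.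
rewrite -!mul_polyC !rmorphM /= !rmorphXn /= rmorph_nat exprD exprMn.
rewrite -mulr_natr; ring.
Qed.

End BinomialPowers.

Section PrimeCharacteristic.

Variables (F : fieldType) (p : nat).
Hypothesis pcharFp : p \in [pchar F].

Let p_pr : prime p := pcharf_prime pcharFp.

Lemma natr_fact_neq0 m : (m < p)%N -> m`!%:R != 0 :> F.
Proof. by move=> lt_m_p; rewrite -(dvdn_pcharf pcharFp) prime_dvd_fact // -ltnNge. Qed.

Lemma natr_lt_neq0 n : (0 < n < p)%N -> n%:R != 0 :> F.
Proof. by case/andP=> n_gt0 lt_n_p; rewrite -(dvdn_pcharf pcharFp) gtnNdvd. Qed.

Lemma natr_bin_neq0 n m : (m <= n < p)%N -> 'C(n, m)%:R != 0 :> F.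
Proof.
case/andP=> le_m_n lt_n_p; have := natr_fact_neq0 lt_n_p.
by rewrite -(bin_fact le_m_n) natrM; apply: contraNneq => ->; rewrite mul0r.
Qed.

Lemma natr_bin_predp_eq0 j :
  (j <= (p.-1).*2)%N -> j != p.-1 -> 'C(j, p.-1)%:R = 0 :> F.
Proof.
move=> le_j ne_j; have [lt_j | le_pj] := ltnP j p.-1; first by rewrite bin_small.
have p_gt0 := prime_gt0 p_pr.
apply/eqP; rewrite -(dvdn_pcharf pcharFp).
have : (p %| j`!)%N by rewrite prime_dvd_fact //; lia.
rewrite -(bin_fact le_pj) !Euclid_dvdM // !prime_dvd_fact //.
by case/orP=> [// | /orP[]]; lia.
Qed.

Lemma horner_polybinom_nat (q : {poly F}) x n m :
  q.[x] = n%:R -> (m < p)%N -> (polybinom q m).[x] = 'C(n, m)%:R.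
Proof.
move=> qx lt_m_p; rewrite /polybinom hornerZ horner_prod.
under eq_bigr => i _ do rewrite hornerD hornerN hornerC qx.
rewrite -natr_ffact -bin_ffact natrM mulrC mulrK //.
by rewrite unitfE natr_fact_neq0.
Qed.

Lemma coef_predp_exp1X_mul_exp1cX c A B :
  c != 0 -> c != 1 -> (A < p)%N -> (B < p)%N ->
  (((1 + 'X) ^+ A * (1 + c *: 'X) ^+ B)`_p.-1 == 0 :> F) = (A + B < p.-1)%N.
Proof.
move=> c_neq0 c_neq1 lt_A_p lt_B_p.
rewrite exp1X_mul_exp1cX coef_sum.
under eq_bigr => i _ do rewrite coefZ coef_exp1X.
have [lt_AB | le_AB] := ltnP (A + B) p.-1.
  rewrite big1 ?eqxx // => i _.
  by rewrite (@bin_small (A + i)) ?mulr0 //; have := ltn_ord i; lia.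
have lt_i0 : (p.-1 - A < B.+1)%N by lia.
rewrite (bigD1 (Ordinal lt_i0)) //= big1 => [|i ne_i]; last first.
  rewrite natr_bin_predp_eq0 ?mulr0 //; first by have := ltn_ord i; lia.
  by apply: contra ne_i => /eqP eq_i; apply/eqP/val_inj => /=; lia.
rewrite addr0 subnKC ?binn ?mulr1; last by lia.
apply/negbTE; rewrite !mulf_neq0 ?expf_neq0 ?natr_bin_neq0 //; last by lia.
by rewrite subr_eq0 eq_sym.
Qed.

End PrimeCharacteristic.

Lemma horner_bpoly p r s x A B : prime p ->
  r%:R * x - 1 = A%:R -> s%:R * x - 1 = B%:R ->
  (bpoly p r s).[x] = ((1 + 'X) ^+ A * (1 + (- (r%:R / s%:R)) *: 'X) ^+ B)`_p.-1.
Proof.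
move=> p_pr r_x s_x; have pcharFp := pchar_Fp p_pr; have p_gt0 := prime_gt0 p_pr.
have rX_x : (r%:R *: 'X - 1).[x] = A%:R by rewrite !hornerE.
have sX_x : (s%:R *: 'X - 1).[x] = B%:R by rewrite !hornerE.
rewrite /bpoly horner_sum coefMr (prednK p_gt0); apply: eq_bigr => k _.
rewrite hornerZ hornerM (horner_polybinom_nat pcharFp rX_x); last by lia.
by rewrite (horner_polybinom_nat pcharFp sX_x) // coef_exp1X coef_exp1cX mulrCA.
Qed.

Theorem theorem12 (p s a a' : nat) :
  prime p -> odd p -> (0 < s)%N -> (s < p.-1)%N ->
  (0 < a)%N -> (a < p)%N -> (0 < a')%N -> (a' < p)%N ->
  a' = s * a %[mod p] ->
  ((bpoly p 1 s).[(a%:R : 'F_p)] == 0) = (a + a' < p)%N.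
Proof.
move=> p_pr _ s_gt0 lt_s_p a_gt0 lt_a_p a'_gt0 lt_a'_p a'_sa.
have pcharFp := pchar_Fp p_pr; have p_gt0 := prime_gt0 p_pr.
have a_x : 1%:R * (a%:R : 'F_p) - 1 = a.-1%:R.
  by rewrite mul1r -{1}(prednK a_gt0) -natr1 addrK.
have a'_x : s%:R * (a%:R : 'F_p) - 1 = a'.-1%:R.
  rewrite -natrM -(Fp_nat_mod p_pr) -a'_sa (Fp_nat_mod p_pr).
  by rewrite -{1}(prednK a'_gt0) -natr1 addrK.
have s_neq0 : s%:R != 0 :> 'F_p by rewrite (natr_lt_neq0 pcharFp) //; lia.
set c := - (1%:R / s%:R) : 'F_p.
have c_neq0 : c != 0 by rewrite oppr_eq0 mul1r invr_eq0.
have c_neq1 : c != 1.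
  have s1_neq0 : s.+1%:R != 0 :> 'F_p by rewrite (natr_lt_neq0 pcharFp) //; lia.
  have s1_c : (1 - c) * s%:R = s.+1%:R.
    by rewrite opprK mulrDl !mul1r mulVf // natr1.
  by apply: contra_neq s1_neq0 => c1; rewrite -s1_c c1 subrr mul0r.
have aa'_neq_p : (a + a' != p)%N.
  have : ~~ (p %| s.+1 * a)%N by rewrite Euclid_dvdM // !gtnNdvd //; lia.
  apply: contraNneq => aa'_p.
  by rewrite /dvdn mulSn -modnDmr -a'_sa modnDmr aa'_p modnn.
rewrite (horner_bpoly p_pr a_x a'_x) (coef_predp_exp1X_mul_exp1cX pcharFp) //; lia.
Qed.
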